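(* Let $S$ be a nontrivial semiring, $\Sigma$ an alphabet, $L\in\mathrm{RevL}_1(\mathbb{B},\Sigma)$, and let $\underline{L}$ be the characteristic series of $L$ over $S$. Then $\underline{L}\in\mathrm{Rev}_1(S,\Sigma)$. As a consequence, $L\in\mathrm{RevL}_1(S,\Sigma)$ and $\mathrm{RevL}_1(\mathbb{B},\Sigma)\subseteq\mathrm{RevL}_1(S,\Sigma)$.
   Context: A semiring $(S,+,\cdot,0,1)$ has $(S,+,0)$ a commutative monoid, $(S,\cdot,1)$ a monoid, two-sided distributivity and $0$ absorbing; it is nontrivial if $0\neq1$. $\mathbb{B}=(\{0,1\},\lor,\land,0,1)$ is the Boolean semiring. A series over $S$ and a finite nonempty alphabet $\Sigma$ is a map $r\colon\Sigma^*\to S$, value $(r,w)$; its support is $\mathrm{supp}(r)=\{w\mid (r,w)\neq0\}$. The characteristic series $\underline{L}$ of $L\subseteq\Sigma^*$ over $S$ has $(\underline{L},w)=1$ for $w\in L$ and $0$ otherwise. A weighted automaton over $S$ and $\Sigma$ is $\mathcal{A}=(Q,\sigma,\iota,\tau)$ with $Q$ finite, $\sigma\colon Q\times\Sigma\times Q\to S$, $\iota,\tau\colon Q\to S$; a run on $w=a_1\cdots a_t$ is $q_0a_1q_1\cdots a_tq_t$ with all $\sigma(q_{k-1},a_k,q_k)\neq0$, of weight $\iota(q_0)\sigma(q_0,a_1,q_1)\cdots\sigma(q_{t-1},a_t,q_t)\tau(q_t)$, and $(\|\mathcal{A}\|,w)$ is the sum of weights of runs on $w$. $\mathcal{A}$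 is reversible if for all $p,p',q,q'\in Q$, $a\in\Sigma$: $\sigma(p,a,q)\neq0\neq\sigma(p,a,q')$ implies $q=q'$, and $\sigma(p,a,q)\neq0\neq\sigma(p',a,q)$ implies $p=p'$. $\mathrm{Rev}_1(S,\Sigma)$ is the set of series realised by reversible weighted automata over $S$ and $\Sigma$ with precisely one state $q$ such that $\iota(q)\neq0$, and $\mathrm{RevL}_1(S,\Sigma)=\{\mathrm{supp}(r)\mid r\in\mathrm{Rev}_1(S,\Sigma)\}$. In particular $\mathrm{RevL}_1(\mathbb{B},\Sigma)$ is the set of languages recognised by finite automata whose transition relation is deterministic and codeterministic, with exactly one initial state and arbitrary set of final states. *)

From HB Require Import structures.
From mathcomp Require Import all_boot all_order all_algebra.
Set Implicit Arguments. Unset Strict Implicit. Unset Printing Implicit Defensive.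
Import GRing.Theory.
Local Open Scope ring_scope.

(* The Boolean semiring B = ({0,1}, or, and, 0, 1), as a fresh two-element
   type (an alias of bool would pick up bool's existing xor-Zmodule). *)
Variant Bsr := B0 | B1.
Definition Bsr2bool (x : Bsr) : bool := if x is B1 then true else false.
Definition bool2Bsr (b : bool) : Bsr := if b then B1 else B0.
Lemma Bsr2boolK : cancel Bsr2bool bool2Bsr. Proof. by case. Qed.
HB.instance Definition _ := Equality.copy Bsr (can_type Bsr2boolK).
HB.instance Definition _ := Choice.copy Bsr (can_type Bsr2boolK).
Definition Bor (x y : Bsr) : Bsr := if x is B1 then B1 else y.
Definition Band (x y : Bsr) : Bsr := if x is B1 then y else B0.
Lemma BorA : associative Bor. Proof. by do 3 case. Qed.
Lemma BorC : commutative Bor. Proof. by do 2 case. Qed.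
Lemma Bor0 : left_id B0 Bor. Proof. by case. Qed.
Lemma BandA : associative Band. Proof. by do 3 case. Qed.
Lemma Band1l : left_id B1 Band. Proof. by case. Qed.
Lemma Band1r : right_id B1 Band. Proof. by case. Qed.
Lemma BandDl : left_distributive Band Bor. Proof. by do 3 case. Qed.
Lemma BandDr : right_distributive Band Bor. Proof. by do 3 case. Qed.
Lemma Band0l : left_zero B0 Band. Proof. by case. Qed.
Lemma Band0r : right_zero B0 Band. Proof. by case. Qed.
Lemma B10 : B1 != B0. Proof. by []. Qed.
HB.instance Definition _ := GRing.isNzSemiRing.Build Bsr
  BorA BorC Bor0 BandA Band1l Band1r BandDl BandDr Band0l Band0r B10.

Section WA.
Variables (S : pzSemiRingType) (Sigma : finType) (Q : finType).
Variables (sigma : Q -> Sigma -> Q -> S) (iota tau : Q -> S).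

(* qs is the sequence q_1..q_t of states visited after reading each letter. *)
Fixpoint is_run (p : Q) (w : seq Sigma) (qs : seq Q) : bool :=
  match w, qs with
  | [::], [::] => true
  | a :: w', q :: qs' => (sigma p a q != 0) && is_run q w' qs'
  | _, _ => false
  end.

Fixpoint path_weight (p : Q) (w : seq Sigma) (qs : seq Q) : S :=
  match w, qs with
  | [::], [::] => tau p
  | a :: w', q :: qs' => sigma p a q * path_weight q w' qs'
  | _, _ => 0
  end.

Definition behaviour (w : seq Sigma) : S :=
  \sum_(q0 : Q) \sum_(qs : (size w).-tuple Q | is_run q0 w qs)
     iota q0 * path_weight q0 w qs.

Definition reversible : Prop :=
  (forall p q q' a, sigma p a q != 0 -> sigma p a q' != 0 -> q = q') /\
  (forall p p' q a, sigma p a q != 0 -> sigma p' a q != 0 -> p = p').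
End WA.

Definition Rev1 (S : pzSemiRingType) (Sigma : finType) (r : seq Sigma -> S) : Prop :=
  exists (Q : finType) (sigma : Q -> Sigma -> Q -> S) (iota tau : Q -> S),
    [/\ reversible sigma,
        exists! q : Q, iota q != 0 &
        forall w, behaviour sigma iota tau w = r w].

Definition supp (S : pzSemiRingType) (Sigma : finType) (r : seq Sigma -> S) :
  pred (seq Sigma) := fun w => r w != 0.

Definition RevL1 (S : pzSemiRingType) (Sigma : finType) (L : pred (seq Sigma)) : Prop :=
  exists r : seq Sigma -> S, Rev1 r /\ supp r =1 L.

Definition charser (S : pzSemiRingType) (Sigma : finType) (L : pred (seq Sigma)) :
  seq Sigma -> S := fun w => if L w then 1 else 0.

(** Send B1 to 1 and B0 to 0.  This map is multiplicative and reflects zero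
    (as S is nontrivial), but it need not be additive.  Applied weightwise to a
    reversible automaton with a single initial state, it keeps the runs and
    reversibility unchanged; as such an automaton has at most one successful
    run on each word, its behaviour is a single product, so the new automaton
    realises the image of the old series, i.e. the characteristic series of
    its support. *)
From HB Require Import structures.
From mathcomp Require Import all_boot all_order all_algebra.
Local Open Scope ring_scope.
Import GRing.Theory.

Section DeterministicRuns.
Context {S : pzSemiRingType} {Sigma Q : finType}.
Context {sigma : Q -> Sigma -> Q -> S} {iota tau : Q -> S}.

Lemma is_run_det :
    (forall p q q' a, sigma p a q != 0 -> sigma p a q' != 0 -> q = q') ->
  forall p w qs qs', is_run sigma p w qs -> is_run sigma p w qs' -> qs = qs'.
Proof.
move=> det p w; elim: w p => [|a w IHw] p [|q qs] [|q' qs'] //=.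
move=> /andP[pq run_qs] /andP[pq' run_qs'].
by move: (det _ _ _ _ pq pq') run_qs' => <- /(IHw _ _ _ run_qs) ->.
Qed.

Lemma behaviour_single_initial q0 w :
    (forall q, iota q != 0 -> q = q0) ->
  behaviour sigma iota tau w =
    \sum_(qs : (size w).-tuple Q | is_run sigma q0 w qs)
       iota q0 * path_weight sigma tau q0 w qs.
Proof.
move=> init; rewrite /behaviour (bigD1 q0) //= [X in _ + X]big1 ?addr0 // => q q_neq.
have -> : iota q = 0 by apply/eqP; apply: contraNT q_neq => /init/eqP.
by rewrite big1 // => qs _; rewrite mul0r.
Qed.

End DeterministicRuns.

Section WeightMap.
Context {S T : pzSemiRingType} {f : S -> T}.
Hypotheses (fM : {morph f : x y / x * y}) (f_eq0 : forall x, (f x == 0) = (x == 0)).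

Lemma map_eq0 : f 0 = 0.
Proof. by apply/eqP; rewrite f_eq0. Qed.

Lemma map_big_atmost1 (I : finType) (P : pred I) (F : I -> S) :
    (forall i j, P i -> P j -> i = j) ->
  f (\sum_(i | P i) F i) = \sum_(i | P i) f (F i).
Proof.
move=> P_uniq; have [i Pi | P0] := pickP P; last by rewrite !big_pred0 ?map_eq0.
have P_i : P =1 pred1 i by move=> j; apply/idP/eqP => [Pj | ->]; [exact: P_uniq|].
by rewrite !(big_pred1 i).
Qed.

Section Automaton.
Context {Sigma Q : finType} {sigma : Q -> Sigma -> Q -> S} {iota tau : Q -> S}.

Let fsigma p a q := f (sigma p a q).
Let fiota q := f (iota q).
Let ftau q := f (tau q).

Lemma is_run_map p w qs : is_run fsigma p w qs = is_run sigma p w qs.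
Proof.
by elim: w p qs => [|a w IHw] p [|q qs] //=; rewrite IHw /fsigma f_eq0.
Qed.

Lemma path_weight_map p w qs :
  path_weight fsigma ftau p w qs = f (path_weight sigma tau p w qs).
Proof.
by elim: w p qs => [|a w IHw] p [|q qs] //=; rewrite ?map_eq0 // IHw fM.
Qed.

Lemma reversible_map : reversible sigma -> reversible fsigma.
Proof.
by case=> fwd bwd; split=> ? ? ? ?; rewrite /fsigma !f_eq0; [apply: fwd | apply: bwd].
Qed.

Lemma behaviour_map q0 w :
    reversible sigma -> (forall q, iota q != 0 -> q = q0) ->
  behaviour fsigma fiota ftau w = f (behaviour sigma iota tau w).
Proof.
move=> [fwd _] init; have finit q : fiota q != 0 -> q = q0 by rewrite /fiota f_eq0 => /init.
rewrite (behaviour_single_initial _ w finit) (behaviour_single_initial _ w init).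
rewrite map_big_atmost1; last first.
  by move=> qs qs' run run'; apply/val_inj/(is_run_det fwd _ _ _ _ run run').
by apply: eq_big => [qs | qs _]; rewrite ?is_run_map // path_weight_map fM.
Qed.

End Automaton.

Lemma Rev1_map {Sigma : finType} {r : seq Sigma -> S} : Rev1 r -> Rev1 (fun w => f (r w)).
Proof.
case=> [Q [sigma [iota [tau [rev [q0 [iota_q0 init_uniq] beh]]]]]].
exists Q, (fun p a q => f (sigma p a q)), (fun q => f (iota q)), (fun q => f (tau q)).
split; first exact: reversible_map rev.
  by exists q0; split=> [|q]; rewrite f_eq0 // => /init_uniq.
by move=> w; rewrite (behaviour_map q0 w rev) -?beh // => q /init_uniq.
Qed.

End WeightMap.

Lemma eq_Rev1 (S : pzSemiRingType) (Sigma : finType) (r r' : seq Sigma -> S) :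
  r =1 r' -> Rev1 r -> Rev1 r'.
Proof.
move=> eq_r [Q [sigma [iota [tau [rev init beh]]]]].
by exists Q, sigma, iota, tau; split=> // w; rewrite beh.
Qed.

Section BooleanToNontrivial.
Variable S : nzSemiRingType.

Definition of_Bsr (x : Bsr) : S := if x is B1 then 1 else 0.

Lemma of_BsrM : {morph of_Bsr : x y / x * y}.
Proof. by case; case=> /=; rewrite ?mul1r ?mul0r. Qed.

Lemma of_Bsr_eq0 x : (of_Bsr x == 0) = (x == 0).
Proof. by case: x; rewrite /= ?oner_eq0 ?eqxx. Qed.

Lemma supp_charser (Sigma : finType) (L : pred (seq Sigma)) : supp (charser S L) =1 L.
Proof. by move=> w; rewrite /supp /charser; case: (L w); rewrite ?oner_neq0 ?eqxx. Qed.

Lemma Rev1_charser_Bsr (Sigma : finType) (L : pred (seq Sigma)) :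
  RevL1 Bsr L -> Rev1 (charser S L).
Proof.
case=> r [rev_r supp_r]; apply: eq_Rev1 (Rev1_map of_BsrM of_Bsr_eq0 rev_r) => w.
by rewrite /charser -supp_r /supp; case: (r w).
Qed.

End BooleanToNontrivial.

Theorem proposition3 (S : nzSemiRingType) (Sigma : finType)
  (HSigma : (0 < #|Sigma|)%N) (L : pred (seq Sigma)) :
  RevL1 Bsr L ->
  [/\ Rev1 (charser S L),
      RevL1 S L &
      forall L' : pred (seq Sigma), RevL1 Bsr L' -> RevL1 S L'].
Proof.
have RevL1_Bsr L' : RevL1 Bsr L' -> RevL1 S L'.
  by move=> revL'; exists (charser S L'); split; [exact: Rev1_charser_Bsr | exact: supp_charser].
by move=> revL; split; [exact: Rev1_charser_Bsr | exact: RevL1_Bsr | exact: RevL1_Bsr].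
Qed.
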